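(* With the emerging metric on finite residue rings described in the context, the finite rings $\mathbb{Z}/n\mathbb{Z}$ locally approximate the real numbers: $\mathsf{lm}^{\mathrm{loc}}\,\mathrm{K}_n=\mathbb{R}$. That is, the relation $\approx$ on $\mathrm{K}_{/\mathfrak{l}}$ is compatible with the ring operations of $\mathrm{K}$, and the quotient $\mathrm{K}_{/\mathfrak{l}}/\!\approx$ with the induced operations and metric is isomorphic to $(\mathbb{R},+,\cdot)$ with the metric $|x-y|$.
   Context: Let $\mathcal{D}$ be a non-principal ultrafilter on $\mathbb{N}$ containing the set of primes, ${}^*\mathbb{Z}=\mathbb{Z}^{\mathbb{N}}/\mathcal{D}$, and $\mathfrak{q}\in{}^*\mathbb{Z}$ the class of $(q)_{q\in\mathbb{N}}$; let $\mathrm{F}={}^*\mathbb{Z}/\mathfrak{q}\,{}^*\mathbb{Z}\cong\prod_{\mathcal{D}}\mathbb{Z}/q\mathbb{Z}$. Assume there is a model ${}^f\mathbb{Z}$ of arithmetic with $\mathbb{Z}\prec{}^f\mathbb{Z}\prec{}^*\mathbb{Z}$ such that $\mathfrak{q}>k$ for all $k\in{}^f\mathbb{Z}$, and let $\mathfrak{l}\in{}^f\mathbb{Z}$ be a positive infinite integer (so $\mathfrak{l}^n<\mathfrak{q}$ for all $n\in\mathbb{N}$). Let $\mathcal{N}\in{}^*\mathbb{Z}$, $\mathcal{N}\ge\mathfrak{q}$, be the class of a sequence of positive integers $(n_j)_j$ with $\mathfrak{q}\mid\mathcal{N}$, and $\mathrm{K}={}^*\mathbb{Z}/\mathcal{N}\,{}^*\mathbb{Z}\cong\prod_{\mathcal{D}}\mathbb{Z}/n_j\mathbb{Z}$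 (the rings $\mathrm{K}_n=\mathbb{Z}/n\mathbb{Z}$); let $s:\mathrm{K}\to\mathrm{F}$ be reduction mod $\mathfrak{q}$. On $\mathrm{F}$: for $m\in\mathbb{N}$ let $Z(m)=\{k\in{}^*\mathbb{Z}:|k|<\mathfrak{l}^m\}$ (embedded in $\mathrm{F}$ by reduction), $S_m(\mathrm{F})=\{z\in\mathrm{F}:\exists k_1,k_2\in Z(m),k_2\neq0,\ z=k_1k_2^{-1},\ |k_1|/|k_2|\le m\}$, $\mathrm{F}_{/\mathfrak{l}}=\bigcup_m S_m(\mathrm{F})$, $\|z\|=\mathrm{st}(|k_1|/|k_2|)$ for the minimal such pair, $\mathsf{d}_F(z_1,z_2)=\|z_1-z_2\|$. On $\mathrm{K}$: $\mathrm{K}_{/\mathfrak{l}}=s^{-1}(\mathrm{F}_{/\mathfrak{l}})$ and $\mathsf{d}_K(x,y)=\mathsf{d}_F(s(x),s(y))$. Define $x\approx y$ iff $\mathsf{d}_K(x,y)\le1/n$ for all $n\in\mathbb{N}$. The local ultraproduct of the $\mathrm{K}_n$ is $\mathrm{K}_{/\mathfrak{l}}/\!\approx$ with induced operations and metric. *)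

From Stdlib Require Import Reals ZArith Znumtheory.
Open Scope R_scope.

(* Sequences of integers: representatives of elements of *Z = Z^N / D,
   and (by reduction) of K = *Z / N*Z and F = *Z / q*Z. *)
Definition Zseq := nat -> Z.

Record ultrafilter (D : (nat -> Prop) -> Prop) : Prop := {
  uf_full  : D (fun _ => True);
  uf_proper : ~ D (fun _ => False);
  uf_inter : forall A B, D A -> D B -> D (fun j => A j /\ B j);
  uf_up    : forall A B : nat -> Prop, (forall j, A j -> B j) -> D A -> D B;
  uf_ultra : forall A : nat -> Prop, D A \/ D (fun j => ~ A j) }.

Definition nonprincipal (D : (nat -> Prop) -> Prop) : Prop :=
  forall k : nat, ~ D (fun j => j = k).

Section Ultra.
Variable D : (nat -> Prop) -> Prop.

Definition sadd (a b : Zseq) : Zseq := fun j => (a j + b j)%Z.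
Definition smul (a b : Zseq) : Zseq := fun j => (a j * b j)%Z.
Definition sopp (a : Zseq) : Zseq := fun j => (- a j)%Z.
Definition sconst (k : Z) : Zseq := fun _ => k.

Definition zeq (a b : Zseq) : Prop := D (fun j => a j = b j).
Definition zlt (a b : Zseq) : Prop := D (fun j => (a j < b j)%Z).

Definition qq : Zseq := fun j => Z.of_nat j.

(* equality in F = *Z / q *Z  (F = prod_D Z/jZ) *)
Definition Feq (x y : Zseq) : Prop := D (fun j => (Z.of_nat j | x j - y j)%Z).
(* equality in K = *Z / N *Z  (K = prod_D Z/n_j Z) *)
Definition Keq (n : Zseq) (x y : Zseq) : Prop := D (fun j => (n j | x j - y j)%Z).

Inductive term : Type :=
| tvar : nat -> term
| tzero : term
| tone : term
| tadd : term -> term -> term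
| tmul : term -> term -> term
| topp : term -> term.

Inductive formula : Type :=
| feq : term -> term -> formula
| flt : term -> term -> formula
| fnot : formula -> formula
| fand : formula -> formula -> formula
| fex : formula -> formula.   (* de Bruijn: binds variable 0 *)

Fixpoint teval (env : nat -> Zseq) (t : term) : Zseq :=
  match t with
  | tvar i => env i
  | tzero => sconst 0
  | tone => sconst 1
  | tadd a b => sadd (teval env a) (teval env b)
  | tmul a b => smul (teval env a) (teval env b)
  | topp a => sopp (teval env a)
  end.

Definition scons (a : Zseq) (env : nat -> Zseq) : nat -> Zseq :=
  fun i => match i with O => a | S i' => env i' end.

Fixpoint holds (P : Zseq -> Prop) (env : nat -> Zseq) (f : formula) : Prop :=
  match f with
  | feq a b => zeq (teval env a) (teval env b)
  | flt a b => zlt (teval env a) (teval env b)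
  | fnot g => ~ holds P env g
  | fand g h => holds P env g /\ holds P env h
  | fex g => exists a, P a /\ holds P (scons a env) g
  end.

Definition elem_substructure (S : Zseq -> Prop) : Prop :=
  (forall a b, zeq a b -> S a -> S b) /\
  (forall (f : formula) (env : nat -> Zseq), (forall i, S (env i)) ->
     (holds S env f <-> holds (fun _ => True) env f)).

Definition contains_Z (S : Zseq -> Prop) : Prop := forall k : Z, S (sconst k).

Variable l : Zseq.

Definition inZm (m : nat) (k : Zseq) : Prop :=
  D (fun j => (Z.abs (k j) < l j ^ Z.of_nat m)%Z).

(* (k1,k2) witnesses z in S_m(F):  k1,k2 in Z(m), k2 <> 0 in *Z,
   z = k1 k2^{-1} in F (i.e. z * k2 = k1 in F, k2 being invertible in F),
   and |k1|/|k2| <= m *)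
Definition Sm_pair (m : nat) (z k1 k2 : Zseq) : Prop :=
  inZm m k1 /\ inZm m k2 /\ ~ zeq k2 (sconst 0) /\
  Feq (smul z k2) k1 /\
  D (fun j => (Z.abs (k1 j) <= Z.of_nat m * Z.abs (k2 j))%Z).

Definition inSm (m : nat) (z : Zseq) : Prop := exists k1 k2, Sm_pair m z k1 k2.

Definition Fl (z : Zseq) : Prop := exists m, inSm m z.

(* standard part of the hyperreal class of a real sequence u: its D-limit *)
Definition Dlim (u : nat -> R) (r : R) : Prop :=
  forall eps, 0 < eps -> D (fun j => Rabs (u j - r) < eps).

Definition normF (z : Zseq) (r : R) : Prop :=
  exists m k1 k2, Sm_pair m z k1 k2 /\
    Dlim (fun j => IZR (Z.abs (k1 j)) / IZR (Z.abs (k2 j))) r.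

(* K_{/l} = s^{-1}(F_{/l}); s = reduction mod q is the identity on representatives *)
Definition Kl (x : Zseq) : Prop := Fl x.

Definition dK (x y : Zseq) (r : R) : Prop := normF (sadd x (sopp y)) r.

Definition approx (x y : Zseq) : Prop :=
  forall n : nat, (0 < n)%nat -> exists r, dK x y r /\ r <= / INR n.

End Ultra.

From Stdlib Require Import Reals ZArith Znumtheory Lia Lra ClassicalEpsilon.
Open Scope R_scope.

(* Every z in F_{/l} is a fraction k1/k2 in F with |k1|, |k2| < l^m and |k1| <= m |k2|.
   Because l^(2m+1) < q, two such representations of the same z have equal cross
   products already in *Z (q divides their difference, which is smaller than q), so the
   standard part st z := st(k1/k2) is well defined.  Sums and products of
   representations are again representations, hence st is a ring morphism on F_{/l},
   d_K(x, y) = |st x - st y|, and ~ is exactly the kernel relation of st.  It is onto R: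
   since q is prime, l is invertible in F and st(floor(r l) / l) = r.  The bounds
   l^M < q come from elementarity: l^M is definable from l, so it lies in fZ, below q. *)

Lemma D_mp D (HU : ultrafilter D) (A B : nat -> Prop) :
  D A -> D (fun j => A j -> B j) -> D B.
Proof.
  intros HA HAB. apply (uf_up _ HU (fun j => A j /\ (A j -> B j))).
  - intros j [a ab]; auto.
  - apply uf_inter; auto.
Qed.

Lemma D_all D (HU : ultrafilter D) (A : nat -> Prop) : (forall j, A j) -> D A.
Proof. intros H. apply (uf_up _ HU (fun _ => True)); auto. apply uf_full; auto. Qed.

Lemma D_nonempty D (HU : ultrafilter D) (A : nat -> Prop) : D A -> exists j, A j.
Proof.
  intros HA. apply NNPP. intros none. apply (uf_proper _ HU).
  apply (uf_up _ HU A); auto. intros j a. apply none; eauto.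
Qed.

Lemma not_zeq0 D (HU : ultrafilter D) (k : Zseq) :
  ~ zeq D k (sconst 0) <-> D (fun j => k j <> 0%Z).
Proof.
  split.
  - intros H. destruct (uf_ultra _ HU (fun j => k j = 0%Z)) as [h|h]; tauto.
  - intros H E. destruct (D_nonempty D HU _ (uf_inter _ HU _ _ H E)) as [j [a b]]. auto.
Qed.

Ltac D_use H := match goal with HU : ultrafilter ?D |- _ => apply (D_mp D HU _ _ H) end.
Ltac D_pointwise := match goal with HU : ultrafilter ?D |- _ => apply (D_all D HU) end.

Section DLimits.
Variable D : (nat -> Prop) -> Prop.
Hypothesis HU : ultrafilter D.

Lemma Dlim_unique u a b : Dlim D u a -> Dlim D u b -> a = b.
Proof.
  intros Ha Hb. apply NNPP. intros ne.
  assert (He : 0 < Rabs (a - b) / 2) by (assert (0 < Rabs (a - b)) by (apply Rabs_pos_lt; lra); lra).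
  destruct (D_nonempty D HU _ (uf_inter _ HU _ _ (Ha _ He) (Hb _ He))) as [j [h1 h2]].
  split_Rabs; lra.
Qed.

Lemma Dlim_ext u v a : D (fun j => u j = v j) -> Dlim D u a -> Dlim D v a.
Proof.
  intros E H eps he. D_use (H eps he). D_use E. D_pointwise.
  intros j e h. rewrite <- e; auto.
Qed.

Lemma Dlim_const c : Dlim D (fun _ => c) c.
Proof. intros eps he. D_pointwise. intros j. rewrite Rminus_diag, Rabs_R0. auto. Qed.

Lemma Dlim_plus u v a b : Dlim D u a -> Dlim D v b -> Dlim D (fun j => u j + v j) (a + b).
Proof.
  intros Ha Hb eps he. D_use (Ha (eps / 2) ltac:(lra)). D_use (Hb (eps / 2) ltac:(lra)).
  D_pointwise. intros j h1 h2. split_Rabs; lra.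
Qed.

Lemma Dlim_opp u a : Dlim D u a -> Dlim D (fun j => - u j) (- a).
Proof. intros Ha eps he. D_use (Ha eps he). D_pointwise. intros j h. split_Rabs; lra. Qed.

Lemma Dlim_abs u a : Dlim D u a -> Dlim D (fun j => Rabs (u j)) (Rabs a).
Proof. intros Ha eps he. D_use (Ha eps he). D_pointwise. intros j h. split_Rabs; lra. Qed.

Lemma Dlim_mult u v a b : Dlim D u a -> Dlim D v b -> Dlim D (fun j => u j * v j) (a * b).
Proof.
  intros Ha Hb eps he.
  set (C := Rabs a + Rabs b + 1).
  assert (hC : 0 < C) by (unfold C; pose proof (Rabs_pos a); pose proof (Rabs_pos b); lra).
  set (d := Rmin 1 (eps / C)).
  assert (hd : 0 < d) by (apply Rmin_glb_lt; [lra | apply Rdiv_lt_0_compat; lra]).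
  assert (hdC : d * C <= eps).
  { apply (Rmult_le_reg_r (/ C)); [apply Rinv_0_lt_compat; lra|].
    rewrite Rmult_assoc, Rinv_r, Rmult_1_r by lra. apply Rmin_r. }
  assert (hd1 : d <= 1) by apply Rmin_l.
  D_use (Ha d hd). D_use (Hb d hd). D_pointwise. intros j h1 h2.
  replace (u j * v j - a * b) with ((u j - a) * (v j - b) + a * (v j - b) + b * (u j - a)) by ring.
  eapply Rle_lt_trans; [apply Rabs_triang|].
  eapply Rle_lt_trans; [apply Rplus_le_compat_r, Rabs_triang|].
  rewrite !Rabs_mult.
  pose proof (Rabs_pos a); pose proof (Rabs_pos b);
  pose proof (Rabs_pos (u j - a)); pose proof (Rabs_pos (v j - b)).
  unfold C in hdC. nra.
Qed.

Lemma Dlim_bounded u B : D (fun j => Rabs (u j) <= B) -> exists r, Dlim D u r.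
Proof.
  intros HB.
  set (E := fun x => D (fun j => x <= u j)).
  assert (bE : bound E).
  { exists B. intros x Ex. apply Rnot_lt_le. intros hx.
    destruct (D_nonempty D HU _ (uf_inter _ HU _ _ Ex HB)) as [j [h1 h2]].
    pose proof (Rle_abs (u j)); lra. }
  assert (nE : exists x, E x).
  { exists (- B). D_use HB. D_pointwise. intros j h.
    pose proof (Rle_abs (- u j)). rewrite Rabs_Ropp in *. lra. }
  destruct (completeness E bE nE) as [r [ub lub]].
  exists r. intros eps he.
  assert (below : D (fun j => r - eps < u j)).
  { destruct (classic (exists x, E x /\ r - eps < x)) as [[x [Ex hx]]|none].
    - D_use Ex. D_pointwise. intros j h. lra.
    - exfalso. enough (r <= r - eps) by lra. apply lub. intros x Ex.
      apply Rnot_lt_le. intros hx. apply none. eauto. }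
  assert (above : D (fun j => u j < r + eps)).
  { destruct (uf_ultra _ HU (fun j => u j < r + eps)) as [h|h]; auto.
    exfalso. enough (hE : E (r + eps)) by (apply ub in hE; lra).
    D_use h. D_pointwise. intros j hj. lra. }
  D_use below. D_use above. D_pointwise. intros j h1 h2. split_Rabs; lra.
Qed.

End DLimits.

Lemma Int_part_close r : Rabs (IZR (Int_part r) - r) < 1.
Proof. destruct (base_Int_part r). apply Rabs_def1; lra. Qed.

Lemma Int_part_mul_abs_lt r L M :
  1 <= L -> Rabs r + 1 <= M -> Rabs (IZR (Int_part (r * L))) < M * L.
Proof.
  intros hL hM. pose proof (Int_part_close (r * L)) as close.
  pose proof (Rabs_triang (IZR (Int_part (r * L)) - r * L) (r * L)) as tri.
  replace (IZR (Int_part (r * L)) - r * L + r * L) with (IZR (Int_part (r * L))) in tri by ring.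
  rewrite Rabs_mult, (Rabs_right L) in tri by lra.
  pose proof (Rabs_pos r). nra.
Qed.

Open Scope Z_scope.

Lemma inverse_mod_prime p a : prime p -> 1 <= a < p -> exists c, (p | c * a - 1).
Proof.
  intros hp ha. destruct (rel_prime_bezout _ _ (rel_prime_le_prime _ _ hp ha)) as [u v e].
  exists u, (- v). lia.
Qed.

Lemma Zabs_mul_lt a b L M : Z.abs a < L -> Z.abs b < M -> Z.abs (a * b) < L * M.
Proof. intros. rewrite Z.abs_mul. apply Z.mul_lt_mono_nonneg; lia. Qed.

Lemma cross_mul_eq_of_small q z a b c d L :
  (q | z * b - a) -> (q | z * d - c) ->
  Z.abs a < L -> Z.abs b < L -> Z.abs c < L -> Z.abs d < L -> 2 * (L * L) <= q ->
  a * d = c * b.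
Proof.
  intros ha hc a_lt b_lt c_lt d_lt small.
  assert (hq : (q | c * b - a * d)).
  { replace (c * b - a * d) with ((z * b - a) * d - (z * d - c) * b) by ring.
    apply Z.divide_sub_r; apply Z.divide_mul_l; assumption. }
  destruct (Z.eq_dec (c * b - a * d) 0) as [e|ne]; [lia|].
  apply Zdivide_bounds in hq; [|exact ne].
  pose proof (Zabs_mul_lt c b L L c_lt b_lt). pose proof (Zabs_mul_lt a d L L a_lt d_lt).
  pose proof (Z.abs_sub_triangle (c * b) (a * d)). lia.
Qed.

Lemma double_pow_sq_le (L : Z) (m : nat) :
  2 <= L -> 2 * (L ^ Z.of_nat m * L ^ Z.of_nat m) <= L ^ Z.of_nat (S (m + m)).
Proof.
  intros hL. rewrite Nat2Z.inj_succ, Nat2Z.inj_add, Z.pow_succ_r, Z.pow_add_r by lia.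
  assert (0 <= L ^ Z.of_nat m) by (apply Z.pow_nonneg; lia). nia.
Qed.

Section LocalRing.
Variables (D : (nat -> Prop) -> Prop) (l : Zseq).
Hypothesis HU : ultrafilter D.
Hypothesis l_unbounded : forall k : Z, D (fun j => k < l j).
Hypothesis l_pow_lt_q : forall M : nat, D (fun j => l j ^ Z.of_nat M < Z.of_nat j).

Lemma inZm_mono m M k : (m <= M)%nat -> inZm D l m k -> inZm D l M k.
Proof.
  intros hm hk. D_use hk. D_use (l_unbounded 0). D_pointwise. intros j l_pos k_lt.
  enough (l j ^ Z.of_nat m <= l j ^ Z.of_nat M) by lia.
  apply Z.pow_le_mono_r; lia.
Qed.

Lemma inZm_const k : inZm D l 1 (sconst k).
Proof.
  D_use (l_unbounded (Z.abs k)). D_pointwise. intros j hj.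
  rewrite Z.pow_1_r. exact hj.
Qed.

Lemma inZm_opp m k : inZm D l m k -> inZm D l m (sopp k).
Proof. intros hk. D_use hk. D_pointwise. intros j. unfold sopp. rewrite Z.abs_opp. auto. Qed.

Lemma inZm_add m a b : inZm D l m a -> inZm D l m b -> inZm D l (S m) (sadd a b).
Proof.
  intros ha hb. D_use ha. D_use hb. D_use (l_unbounded 1). D_pointwise.
  intros j l_gt1 b_lt a_lt. unfold sadd.
  rewrite Nat2Z.inj_succ, Z.pow_succ_r by lia.
  pose proof (Z.abs_triangle (a j) (b j)). nia.
Qed.

Lemma inZm_mul m m' a b : inZm D l m a -> inZm D l m' b -> inZm D l (m + m') (smul a b).
Proof.
  intros ha hb. D_use ha. D_use hb. D_pointwise. intros j b_lt a_lt. unfold smul.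
  rewrite Nat2Z.inj_add, Z.pow_add_r by lia. apply Zabs_mul_lt; assumption.
Qed.

Lemma Sm_pair_mono m M z a b : (m <= M)%nat -> Sm_pair D l m z a b -> Sm_pair D l M z a b.
Proof.
  intros hm [a_in [b_in [b_nz [zb_a ab_le]]]].
  repeat split; try (eapply inZm_mono; eassumption); try assumption.
  D_use ab_le. D_pointwise. intros j h. nia.
Qed.

Lemma Sm_pair_denom_nonzero m z a b : Sm_pair D l m z a b -> D (fun j => b j <> 0).
Proof. intros [_ [_ [b_nz _]]]. apply not_zeq0; assumption. Qed.

Lemma Sm_pair_cross_eq m m' z a b c d :
  Sm_pair D l m z a b -> Sm_pair D l m' z c d -> D (fun j => a j * d j = c j * b j).
Proof.
  intros p p'. set (M := Nat.max m m').
  destruct (Sm_pair_mono m M z a b ltac:(lia) p) as [a_in [b_in [_ [zb_a _]]]].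
  destruct (Sm_pair_mono m' M z c d ltac:(lia) p') as [c_in [d_in [_ [zd_c _]]]].
  D_use a_in. D_use b_in. D_use c_in. D_use d_in. D_use zb_a. D_use zd_c.
  D_use (l_pow_lt_q (S (M + M))). D_use (l_unbounded 1). D_pointwise.
  intros j l_gt1 pow_lt_q hd hb d_lt c_lt b_lt a_lt.
  pose proof (double_pow_sq_le (l j) M ltac:(lia)).
  eapply cross_mul_eq_of_small; [exact hb | exact hd | eassumption .. | lia].
Qed.

Lemma Sm_pair_opp m z a b : Sm_pair D l m z a b -> Sm_pair D l m (sopp z) (sopp a) b.
Proof.
  intros [a_in [b_in [b_nz [zb_a ab_le]]]].
  repeat split; try apply inZm_opp; try assumption.
  - D_use zb_a. D_pointwise. intros j h. unfold smul, sopp.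
    replace (- z j * b j - - a j) with (- (z j * b j - a j)) by ring.
    apply Z.divide_opp_r; assumption.
  - D_use ab_le. D_pointwise. intros j h. unfold sopp. rewrite Z.abs_opp. assumption.
Qed.

Lemma Sm_pair_add m z w a b c d :
  Sm_pair D l m z a b -> Sm_pair D l m w c d ->
  Sm_pair D l (S (m + m)) (sadd z w) (sadd (smul a d) (smul c b)) (smul b d).
Proof.
  intros [a_in [b_in [b_nz [zb_a ab_le]]]] [c_in [d_in [d_nz [wd_c cd_le]]]].
  apply not_zeq0 in b_nz, d_nz; try assumption.
  repeat split.
  - apply inZm_add; apply inZm_mul; assumption.
  - apply (inZm_mono (m + m)); [lia | apply inZm_mul; assumption].
  - apply not_zeq0; [assumption|]. D_use b_nz. D_use d_nz. D_pointwise.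
    intros j hd hb. unfold smul. lia.
  - D_use zb_a. D_use wd_c. D_pointwise. intros j hw hz. unfold smul, sadd.
    replace ((z j + w j) * (b j * d j) - (a j * d j + c j * b j)) with
      ((z j * b j - a j) * d j + (w j * d j - c j) * b j) by ring.
    apply Z.divide_add_r; apply Z.divide_mul_l; assumption.
  - D_use ab_le. D_use cd_le. D_pointwise. intros j hc ha. unfold smul, sadd.
    pose proof (Z.abs_triangle (a j * d j) (c j * b j)).
    rewrite !Z.abs_mul in *. rewrite Nat2Z.inj_succ, Nat2Z.inj_add.
    pose proof (Z.abs_nonneg (b j)). pose proof (Z.abs_nonneg (d j)). nia.
Qed.

Lemma Sm_pair_mul m z w a b c d :
  Sm_pair D l m z a b -> Sm_pair D l m w c d ->
  Sm_pair D l (m + m + m * m) (smul z w) (smul a c) (smul b d).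
Proof.
  intros [a_in [b_in [b_nz [zb_a ab_le]]]] [c_in [d_in [d_nz [wd_c cd_le]]]].
  apply not_zeq0 in b_nz, d_nz; try assumption.
  repeat split.
  - apply (inZm_mono (m + m)); [lia | apply inZm_mul; assumption].
  - apply (inZm_mono (m + m)); [lia | apply inZm_mul; assumption].
  - apply not_zeq0; [assumption|]. D_use b_nz. D_use d_nz. D_pointwise.
    intros j hd hb. unfold smul. lia.
  - D_use zb_a. D_use wd_c. D_pointwise. intros j hw hz. unfold smul.
    replace (z j * w j * (b j * d j) - a j * c j) with
      ((z j * b j - a j) * (w j * d j) + a j * (w j * d j - c j)) by ring.
    apply Z.divide_add_r; [apply Z.divide_mul_l | apply Z.divide_mul_r]; assumption.
  - D_use ab_le. D_use cd_le. D_pointwise. intros j hc ha. unfold smul.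
    rewrite !Z.abs_mul. rewrite !Nat2Z.inj_add, Nat2Z.inj_mul.
    pose proof (Z.abs_nonneg (a j)). pose proof (Z.abs_nonneg (c j)).
    pose proof (Z.abs_nonneg (b j)). pose proof (Z.abs_nonneg (d j)).
    assert (Z.abs (a j) * Z.abs (c j) <= Z.of_nat m * Z.abs (b j) * (Z.of_nat m * Z.abs (d j)))
      by (apply Z.mul_le_mono_nonneg; lia).
    nia.
Qed.

Lemma Sm_pair_const k : Sm_pair D l (S (Z.abs_nat k)) (sconst k) (sconst k) (sconst 1).
Proof.
  repeat split; try (apply (inZm_mono 1); [lia | apply inZm_const]).
  - apply not_zeq0; [assumption|]. D_pointwise. unfold sconst. lia.
  - D_pointwise. intros j. unfold smul, sconst. rewrite Z.mul_1_r, Z.sub_diag.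
    apply Z.divide_0_r.
  - D_pointwise. intros j. unfold sconst. lia.
Qed.

Lemma Fl_common_index x y : Fl D l x -> Fl D l y ->
  exists m a b c d, Sm_pair D l m x a b /\ Sm_pair D l m y c d.
Proof.
  intros [m [a [b p]]] [m' [c [d q]]].
  exists (Nat.max m m'), a, b, c, d.
  split; [apply (Sm_pair_mono m) | apply (Sm_pair_mono m')]; assumption || lia.
Qed.

Lemma Fl_add x y : Fl D l x -> Fl D l y -> Fl D l (sadd x y).
Proof.
  intros hx hy. destruct (Fl_common_index x y hx hy) as [m [a [b [c [d [p q]]]]]].
  do 3 eexists. apply (Sm_pair_add _ _ _ _ _ _ _ p q).
Qed.

Lemma Fl_mul x y : Fl D l x -> Fl D l y -> Fl D l (smul x y).
Proof.
  intros hx hy. destruct (Fl_common_index x y hx hy) as [m [a [b [c [d [p q]]]]]].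
  do 3 eexists. apply (Sm_pair_mul _ _ _ _ _ _ _ p q).
Qed.

Lemma Fl_opp x : Fl D l x -> Fl D l (sopp x).
Proof. intros [m [a [b p]]]. do 3 eexists. apply (Sm_pair_opp _ _ _ _ p). Qed.

Lemma Fl_const k : Fl D l (sconst k).
Proof. do 3 eexists. apply Sm_pair_const. Qed.

Close Scope Z_scope.

Definition ratio (a b : Zseq) (j : nat) : R := IZR (a j) / IZR (b j).

Lemma Sm_pair_ratio_has_Dlim m z a b : Sm_pair D l m z a b -> exists r, Dlim D (ratio a b) r.
Proof.
  intros p. apply (Dlim_bounded D HU _ (INR m)).
  destruct p as [_ [_ [b_nz [_ ab_le]]]]. apply not_zeq0 in b_nz; [|assumption].
  D_use b_nz. D_use ab_le. D_pointwise. intros j ab hb. unfold ratio, Rdiv.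
  rewrite Rabs_mult, Rabs_inv, !Rabs_Zabs.
  assert (0 < IZR (Z.abs (b j))) by (apply IZR_lt; lia).
  apply (Rmult_le_reg_r (IZR (Z.abs (b j)))); [assumption|].
  rewrite Rmult_assoc, Rinv_l, Rmult_1_r by lra.
  rewrite INR_IZR_INZ, <- mult_IZR. apply IZR_le. assumption.
Qed.

Lemma ratio_cross_eq a b c d :
  D (fun j => (a j * d j = c j * b j)%Z) -> D (fun j => b j <> 0%Z) -> D (fun j => d j <> 0%Z) ->
  D (fun j => ratio a b j = ratio c d j).
Proof.
  intros E hb hd. D_use E. D_use hb. D_use hd. D_pointwise. intros j d_nz b_nz e.
  unfold ratio. apply (f_equal IZR) in e. rewrite !mult_IZR in e.
  apply not_0_IZR in b_nz, d_nz. field_simplify_eq; [lra | tauto].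
Qed.

Definition st_rep (z : Zseq) (r : R) : Prop :=
  exists m a b, Sm_pair D l m z a b /\ Dlim D (ratio a b) r.

(* An arbitrary real outside F_{/l}. *)
Definition st (z : Zseq) : R := epsilon (inhabits 0) (st_rep z).

Lemma Sm_pair_st m z a b : Sm_pair D l m z a b -> Dlim D (ratio a b) (st z).
Proof.
  intros p. destruct (Sm_pair_ratio_has_Dlim m z a b p) as [r hr].
  assert (h : st_rep z (st z)) by (unfold st; apply epsilon_spec; exists r, m, a, b; auto).
  destruct h as [m' [c [d [p' hl]]]].
  apply (Dlim_ext D HU (ratio c d)); [|assumption].
  apply ratio_cross_eq; [apply (Sm_pair_cross_eq m' m z) |
    eapply Sm_pair_denom_nonzero .. ]; eassumption.
Qed.

Lemma st_eq_of_pair m z a b u r :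
  Sm_pair D l m z a b -> Dlim D u r -> D (fun j => u j = ratio a b j) -> st z = r.
Proof.
  intros p hu E. apply (Dlim_unique D HU (ratio a b)); [apply (Sm_pair_st m z a b p)|].
  apply (Dlim_ext D HU u); assumption.
Qed.

Lemma st_add x y : Fl D l x -> Fl D l y -> st (sadd x y) = st x + st y.
Proof.
  intros hx hy. destruct (Fl_common_index x y hx hy) as [m [a [b [c [d [p q]]]]]].
  eapply (st_eq_of_pair _ _ _ _ _ _ (Sm_pair_add m x y a b c d p q));
    [apply Dlim_plus; [assumption | eapply Sm_pair_st; eassumption ..]|].
  pose proof (Sm_pair_denom_nonzero m x a b p) as b_nz.
  pose proof (Sm_pair_denom_nonzero m y c d q) as d_nz.
  D_use b_nz. D_use d_nz. D_pointwise. intros j hd hb.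
  unfold ratio, sadd, smul. rewrite plus_IZR, !mult_IZR.
  apply not_0_IZR in hb, hd. field; auto.
Qed.

Lemma st_mul x y : Fl D l x -> Fl D l y -> st (smul x y) = st x * st y.
Proof.
  intros hx hy. destruct (Fl_common_index x y hx hy) as [m [a [b [c [d [p q]]]]]].
  eapply (st_eq_of_pair _ _ _ _ _ _ (Sm_pair_mul m x y a b c d p q));
    [apply Dlim_mult; [assumption | eapply Sm_pair_st; eassumption ..]|].
  pose proof (Sm_pair_denom_nonzero m x a b p) as b_nz.
  pose proof (Sm_pair_denom_nonzero m y c d q) as d_nz.
  D_use b_nz. D_use d_nz. D_pointwise. intros j hd hb.
  unfold ratio, smul. rewrite !mult_IZR.
  apply not_0_IZR in hb, hd. field; auto.
Qed.

Lemma st_opp x : Fl D l x -> st (sopp x) = - st x.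
Proof.
  intros [m [a [b p]]].
  eapply (st_eq_of_pair _ _ _ _ _ _ (Sm_pair_opp m x a b p));
    [apply Dlim_opp; [assumption | eapply Sm_pair_st; eassumption]|].
  D_pointwise. intros j. unfold ratio, sopp. rewrite opp_IZR. unfold Rdiv. ring.
Qed.

Lemma st_const k : st (sconst k) = IZR k.
Proof.
  apply (st_eq_of_pair _ _ _ _ _ _ (Sm_pair_const k) (Dlim_const D HU (IZR k))).
  D_pointwise. intros j. unfold ratio, sconst. field.
Qed.

Lemma abs_ratio a b j : IZR (Z.abs (a j)) / IZR (Z.abs (b j)) = Rabs (ratio a b j).
Proof. unfold ratio, Rdiv. rewrite Rabs_mult, Rabs_inv, !abs_IZR. reflexivity. Qed.

Lemma normF_iff z r : Fl D l z -> (normF D l z r <-> r = Rabs (st z)).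
Proof.
  assert (abs_st : forall m a b, Sm_pair D l m z a b ->
    Dlim D (fun j => IZR (Z.abs (a j)) / IZR (Z.abs (b j))) (Rabs (st z))).
  { intros m a b p. apply (Dlim_ext D HU (fun j => Rabs (ratio a b j))).
    - D_pointwise. intros j. symmetry. apply abs_ratio.
    - apply Dlim_abs; [assumption | eapply Sm_pair_st; eassumption]. }
  intros hz. split.
  - intros [m [a [b [p hr]]]]. apply (Dlim_unique D HU _ _ _ hr (abs_st m a b p)).
  - intros ->. destruct hz as [m [a [b p]]]. exists m, a, b. split; [assumption | apply (abs_st m a b p)].
Qed.

Lemma dK_iff x y r : Fl D l x -> Fl D l y -> (dK D l x y r <-> r = Rabs (st x - st y)).
Proof.
  intros hx hy. unfold dK. rewrite normF_iff by (apply Fl_add, Fl_opp; assumption).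
  rewrite st_add, st_opp by (try apply Fl_opp; assumption). reflexivity.
Qed.

Lemma approx_iff x y : Fl D l x -> Fl D l y -> (approx D l x y <-> st x = st y).
Proof.
  intros hx hy. unfold approx. split.
  - intros close. apply NNPP. intros ne.
    assert (gap : 0 < Rabs (st x - st y)) by (apply Rabs_pos_lt; lra).
    destruct (archimed_cor1 _ gap) as [n [hn n_pos]].
    destruct (close n n_pos) as [r [hr r_le]]. rewrite dK_iff in hr by assumption. lra.
  - intros e n n_pos. exists 0. split.
    + rewrite dK_iff, e, Rminus_diag, Rabs_R0 by assumption. reflexivity.
    + left. apply Rinv_0_lt_compat, lt_0_INR. assumption.
Qed.

Hypothesis q_prime : D (fun j => prime (Z.of_nat j)).

Definition inv_mod_q : Zseq :=
  fun j => epsilon (inhabits 0%Z) (fun c => (Z.of_nat j | c * l j - 1)%Z).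

Lemma inv_mod_q_spec : D (fun j => (Z.of_nat j | inv_mod_q j * l j - 1)%Z).
Proof.
  D_use q_prime. D_use (l_pow_lt_q 1). D_use (l_unbounded 0). D_pointwise.
  intros j l_pos l_lt_q hp. unfold inv_mod_q. apply epsilon_spec, inverse_mod_prime; [assumption|].
  rewrite Z.pow_1_r in l_lt_q. lia.
Qed.

Definition scaled_floor (r : R) : Zseq := fun j => Int_part (r * IZR (l j)).

Lemma Dlim_scaled_floor_ratio r : Dlim D (ratio (scaled_floor r) l) r.
Proof.
  intros eps he. destruct (archimed_cor1 _ he) as [N [hN N_pos]].
  D_use (l_unbounded (Z.of_nat N)). D_pointwise. intros j hl.
  unfold ratio, scaled_floor. set (L := IZR (l j)).
  assert (N_lt_L : INR N < L) by (rewrite INR_IZR_INZ; apply IZR_lt; assumption).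
  assert (N_gt0 : 0 < INR N) by (apply lt_0_INR; assumption).
  pose proof (Int_part_close (r * L)) as close.
  replace (IZR (Int_part (r * L)) / L - r) with ((IZR (Int_part (r * L)) - r * L) * / L)
    by (field; lra).
  rewrite Rabs_mult, Rabs_inv, (Rabs_right L) by lra.
  apply Rlt_trans with (/ INR N); [|assumption].
  apply Rlt_le_trans with (1 * / L).
  - apply Rmult_lt_compat_r; [apply Rinv_0_lt_compat; lra | assumption].
  - rewrite Rmult_1_l. left. apply Rinv_lt_contravar; [nra | assumption].
Qed.

Lemma Sm_pair_scaled_floor r M :
  Rabs r + 2 < INR M -> Sm_pair D l M (smul inv_mod_q (scaled_floor r)) (scaled_floor r) l.
Proof.
  intros hM. set (k := scaled_floor r).
  assert (M_ge2 : (2 <= M)%nat) by (apply INR_le; simpl; pose proof (Rabs_pos r); lra).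
  assert (k_bound : D (fun j => (Z.abs (k j) < Z.of_nat M * l j)%Z /\ (Z.of_nat M < l j)%Z)).
  { D_use (l_unbounded (Z.of_nat M)). D_pointwise. intros j hl. split; [|assumption].
    apply lt_IZR. rewrite abs_IZR, mult_IZR, <- INR_IZR_INZ.
    apply Int_part_mul_abs_lt; [apply IZR_le; lia | lra]. }
  repeat split.
  - apply (inZm_mono 2); [assumption|]. D_use k_bound. D_pointwise.
    intros j [k_lt M_lt]. rewrite Z.pow_2_r. nia.
  - apply (inZm_mono 2); [assumption|]. D_use k_bound. D_pointwise.
    intros j [_ M_lt]. rewrite Z.pow_2_r. nia.
  - apply not_zeq0; [assumption|]. D_use k_bound. D_pointwise. intros j [_ M_lt]. lia.
  - D_use inv_mod_q_spec. D_pointwise. intros j hinv. unfold smul.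
    replace (inv_mod_q j * k j * l j - k j)%Z with (k j * (inv_mod_q j * l j - 1))%Z by ring.
    apply Z.divide_mul_r. assumption.
  - D_use k_bound. D_pointwise. intros j [k_lt M_lt]. lia.
Qed.

Lemma st_surjective r : exists x, Fl D l x /\ st x = r.
Proof.
  destruct (INR_unbounded (Rabs r + 2)) as [M hM].
  pose proof (Sm_pair_scaled_floor r M hM) as p.
  exists (smul inv_mod_q (scaled_floor r)). split; [exists M, (scaled_floor r), l; exact p|].
  apply (Dlim_unique D HU (ratio (scaled_floor r) l)); [eapply Sm_pair_st; eassumption|].
  apply Dlim_scaled_floor_ratio.
Qed.

End LocalRing.

Close Scope Z_scope.

Fixpoint tpow (M : nat) (t : term) : term :=
  match M with O => tone | S M' => tmul t (tpow M' t) end.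

Lemma teval_tpow env M t j : teval env (tpow M t) j = (teval env t j ^ Z.of_nat M)%Z.
Proof.
  induction M as [|M IH]; [reflexivity|].
  cbn [tpow teval]. unfold smul. rewrite IH, Nat2Z.inj_succ, Z.pow_succ_r by lia. ring.
Qed.

Lemma pow_lt_q_of_elem_substructure D fZ l :
  ultrafilter D -> elem_substructure D fZ -> (forall k, fZ k -> zlt D k qq) -> fZ l ->
  forall M : nat, D (fun j => (l j ^ Z.of_nat M < Z.of_nat j)%Z).
Proof.
  intros HU [_ elem] below_q fZ_l M.
  set (env := fun _ : nat => l).
  set (f := fex (feq (tvar 0) (tpow M (tvar 1)))).
  assert (in_Zstar : holds D (fun _ => True) env f).
  { exists (fun j => (l j ^ Z.of_nat M)%Z). split; [exact I|].
    D_pointwise. intros j. rewrite teval_tpow. reflexivity. }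
  apply (elem f env (fun _ => fZ_l)) in in_Zstar as [a [fZ_a a_eq]].
  D_use (below_q a fZ_a). D_use a_eq. D_pointwise. intros j e a_lt.
  cbn [teval] in e. rewrite teval_tpow in e. change (a j = l j ^ Z.of_nat M)%Z in e.
  unfold qq in a_lt. lia.
Qed.

Theorem mainTheorem5
  (D : (nat -> Prop) -> Prop) (n : Zseq) (fZ : Zseq -> Prop) (l : Zseq) :
  ultrafilter D -> nonprincipal D ->
  D (fun j => prime (Z.of_nat j)) ->
  (* fZ is a model of arithmetic with Z < fZ < *Z, and q > fZ *)
  contains_Z fZ -> elem_substructure D fZ ->
  (forall k, fZ k -> zlt D k (qq)) ->
  (* l in fZ is a positive infinite integer *)
  fZ l -> (forall k : Z, zlt D (sconst k) l) ->
  (* N = class of a sequence of positive integers, N >= q, q | N *)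
  (forall j, (0 < n j)%Z) ->
  D (fun j => (Z.of_nat j <= n j)%Z) ->
  D (fun j => (Z.of_nat j | n j)%Z) ->
  (* K_{/l} is a subring of K *)
  ((forall x y, Kl D l x -> Kl D l y ->
      Kl D l (sadd x y) /\ Kl D l (smul x y) /\ Kl D l (sopp x)) /\
   Kl D l (sconst 0) /\ Kl D l (sconst 1)) /\
  (* ~ is compatible with the ring operations *)
  (forall x x' y y', Kl D l x -> Kl D l x' -> Kl D l y -> Kl D l y' ->
      approx D l x x' -> approx D l y y' ->
      approx D l (sadd x y) (sadd x' y') /\
      approx D l (smul x y) (smul x' y') /\
      approx D l (sopp x) (sopp x')) /\
  (* K_{/l}/~ is isomorphic, as a ring and a metric space, to R *)
  (exists phi : Zseq -> R,
      (forall x y, Kl D l x -> Kl D l y -> (approx D l x y <-> phi x = phi y)) /\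
      (forall r : R, exists x, Kl D l x /\ phi x = r) /\
      (forall x y, Kl D l x -> Kl D l y ->
          phi (sadd x y) = phi x + phi y /\ phi (smul x y) = phi x * phi y) /\
      phi (sconst 1) = 1 /\
      (forall x y r, Kl D l x -> Kl D l y ->
          (dK D l x y r <-> r = Rabs (phi x - phi y)))).
Proof.
  intros HU _ q_prime _ elem below_q fZ_l l_unbounded _ _ _.
  pose proof (pow_lt_q_of_elem_substructure D fZ l HU elem below_q fZ_l) as l_pow_lt_q.
  unfold Kl. split; [|split].
  - split; [|split; apply Fl_const; assumption].
    intros x y hx hy. split; [|split]; [apply Fl_add | apply Fl_mul | apply Fl_opp]; assumption.
  - intros x x' y y' hx hx' hy hy' ax ay.
    rewrite approx_iff in ax, ay by assumption.
    rewrite !approx_iff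
      by first [assumption | apply Fl_add; assumption | apply Fl_mul; assumption | apply Fl_opp; assumption].
    rewrite !st_add, !st_mul, !st_opp by assumption. split; [|split]; congruence.
  - exists (st D l). split; [|split; [|split; [|split]]].
    + intros x y hx hy. apply approx_iff; assumption.
    + intros r. apply st_surjective; assumption.
    + intros x y hx hy. split; [apply st_add | apply st_mul]; assumption.
    + rewrite st_const; assumption || reflexivity.
    + intros x y r hx hy. apply dK_iff; assumption.
Qed.
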